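(* Let $0<\underline b\le\bar b<\infty$ and $0<\underline\theta\le\bar\theta<\infty$. There exists a constant $C>0$ depending only on $\nu,\underline b,\bar b,\underline\theta,\bar\theta$ such that for all $\delta\in(0,1]$, $b\in[\underline b,\bar b]$, $\theta\in[\underline\theta,\bar\theta]$ and $\lambda\in[-\pi,\pi]$: $$a^*_{b,\delta\theta}(\lambda)\le a^\delta_{b,\theta}(\lambda)\le a^*_{b,\delta\theta}(\lambda)+C\delta^{2\nu},\qquad a^\delta_{b,\theta}(\lambda)\le C\,g^*_{\nu,\delta\theta}(\lambda).$$
   Context: Fix $\nu\ge1/2$. For $\alpha>0$, $\omega\in\mathbb R$ let $g^*_{\nu,\alpha}(\omega)=C_\nu\alpha^{2\nu}(\alpha^2+\omega^2)^{-(\nu+1/2)}$ with $C_\nu=\Gamma(\nu+\frac12)/(\sqrt\pi\,\Gamma(\nu))$. For $\delta,\theta>0$ and $\lambda\in[-\pi,\pi]$ let $g^\delta_{\nu,\theta}(\lambda)=\sum_{k\in\mathbb Z}g^*_{\nu,\delta\theta}(\lambda+2k\pi)$. For $b>0$: $a^\delta_{b,\theta}=\dfrac{b\,g^\delta_{\nu,\theta}}{b\,g^\delta_{\nu,\theta}+(2\pi)^{-1}}$ and $a^*_{b,\alpha}=\dfrac{b\,g^*_{\nu,\alpha}}{b\,g^*_{\nu,\alpha}+(2\pi)^{-1}}$. *)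

From Stdlib Require Import Reals Lra Lia ZArith ClassicalEpsilon.
Open Scope R_scope.

(* Euler's Gamma function via Gauss's limit formula:
   Gamma x = lim_n n! n^x / (x (x+1) ... (x+n)),  for x > 0. *)
Definition gauss_seq (x : R) (n : nat) : R :=
  INR (fact n) * Rpower (INR n) x / prod_f_R0 (fun k => x + INR k) n.

Definition Gamma (x : R) : R :=
  epsilon (inhabits 0) (fun g => Un_cv (gauss_seq x) g).

(* Sum over k in Z, taken as the limit of symmetric partial sums
   sum_{|k| <= n} f k (all summands here are nonnegative). *)
Definition sumZ (f : Z -> R) : R :=
  epsilon (inhabits 0) (fun l =>
    infinite_sum
      (fun n => match n with
                | O => f 0%Z
                | S _ => f (Z.of_nat n) + f (- Z.of_nat n)%Z
                end) l).

Definition C_nu (nu : R) : R := Gamma (nu + /2) / (sqrt PI * Gamma nu).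

Definition gstar (nu alpha omega : R) : R :=
  C_nu nu * Rpower alpha (2 * nu)
  * Rpower (alpha ^ 2 + omega ^ 2) (- (nu + /2)).

Definition gdelta (nu delta theta lambda : R) : R :=
  sumZ (fun k => gstar nu (delta * theta) (lambda + 2 * IZR k * PI)).

Definition adelta (nu b delta theta lambda : R) : R :=
  b * gdelta nu delta theta lambda
  / (b * gdelta nu delta theta lambda + / (2 * PI)).

Definition astar (nu b alpha lambda : R) : R :=
  b * gstar nu alpha lambda / (b * gstar nu alpha lambda + / (2 * PI)).

From Stdlib Require Import Reals Lra Lia ZArith ClassicalEpsilon.
Open Scope R_scope.

(* Write a = delta theta and K = C_nu a^(2 nu), so that
   g*(w) = K (a^2 + w^2)^(-(nu+1/2)).
   1. C_nu > 0.  Gamma is defined by Gauss's limit formula; for x > 0 the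
      Gauss sequence increases from n = 1 on and is dominated by a
      decreasing companion sequence, hence converges to a positive limit.
   2. Periodisation.  For |lambda| <= pi and |k| = m >= 1 we have
      |lambda + 2 k pi| >= m, and since nu + 1/2 >= 1 the k-th term is at
      most K/m^2 <= 2K (1/m - 1/(m+1)); telescoping gives
      g*(lambda) <= g^delta(lambda) <= g*(lambda) + 4K.
   3. The map x |-> x/(x+d) is nondecreasing, 1/d-Lipschitz and below x/d.
   4. Finally K <= C' delta^(2 nu) (as theta <= thu) and
      K <= C'' g*(lambda) (as a^2 + lambda^2 <= thu^2 + pi^2), which turns
      the bounds of 2 and 3 into the three claimed inequalities. *)

Lemma ln_le_sub1 y : 0 < y -> ln y <= y - 1.
Proof.
  intro Hy. pose proof (exp_ineq1_le (ln y)) as H. rewrite exp_ln in H; lra.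
Qed.

Lemma exp_le_mono a b : a <= b -> exp a <= exp b.
Proof.
  intro H. destruct (Rle_lt_or_eq_dec _ _ H) as [Hlt | ->].
  - left; now apply exp_increasing.
  - lra.
Qed.

Lemma Rpower_pos a b : 0 < Rpower a b.
Proof. unfold Rpower; apply exp_pos. Qed.

Section GaussLimit.

Variable x : R.
Hypothesis Hx : 0 < x.

Let P (n : nat) : R := prod_f_R0 (fun k => x + INR k) n.

Lemma gauss_prod_pos n : 0 < P n.
Proof.
  unfold P; induction n as [|n IH]; cbn [prod_f_R0]; [simpl; lra |].
  apply Rmult_lt_0_compat; [exact IH |].
  pose proof (pos_INR (S n)); lra.
Qed.

Lemma gauss_prod_S n : P (S n) = P n * (x + INR n + 1).
Proof. unfold P; cbn [prod_f_R0]. rewrite S_INR; ring. Qed.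

Lemma fact_pos n : 0 < INR (fact n).
Proof. apply lt_0_INR, lt_O_fact. Qed.

Lemma fact_S n : INR (fact (S n)) = INR (fact n) * (INR n + 1).
Proof. change (fact (S n)) with (S n * fact n)%nat. rewrite mult_INR, S_INR; ring. Qed.

(* Sequences of the form n! h(n) / P n, compared at n and n+1: both values
   are the positive factor [gauss_ratio n] times (n+1) h(n+1), resp.
   (x+n+1) h(n). *)
Let gauss_ratio (n : nat) : R := INR (fact n) / (P n * (x + INR n + 1)).

Lemma gauss_ratio_pos n : 0 < gauss_ratio n.
Proof.
  pose proof (gauss_prod_pos n). pose proof (fact_pos n). pose proof (pos_INR n).
  apply Rdiv_lt_0_compat; nra.
Qed.

Lemma gauss_term_S n A :
  INR (fact (S n)) * A / P (S n) = gauss_ratio n * ((INR n + 1) * A).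
Proof.
  rewrite gauss_prod_S, fact_S. unfold gauss_ratio.
  pose proof (gauss_prod_pos n). pose proof (pos_INR n). field; lra.
Qed.

Lemma gauss_term n B :
  INR (fact n) * B / P n = gauss_ratio n * ((x + INR n + 1) * B).
Proof.
  unfold gauss_ratio. pose proof (gauss_prod_pos n). pose proof (pos_INR n). field; lra.
Qed.

(* (x+m+1) m^x <= (m+1) (m+1)^x, using ln (1 + 1/m) >= 1/(m+1). *)
Lemma gauss_inc_step m : 0 < m ->
  (x + m + 1) * Rpower m x <= (m + 1) * Rpower (m + 1) x.
Proof.
  intro Hm.
  assert (E : Rpower (m + 1) x = Rpower m x * Rpower ((m + 1) / m) x).
  { rewrite Rpower_mult_distr by (try apply Rdiv_lt_0_compat; lra).
    f_equal; field; lra. }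
  assert (Hlog : / (m + 1) <= ln ((m + 1) / m)).
  { replace ((m + 1) / m) with (/ (m / (m + 1))) by (field; lra).
    assert (Hq : 0 < m / (m + 1)) by (apply Rdiv_lt_0_compat; lra).
    rewrite ln_Rinv by exact Hq.
    pose proof (ln_le_sub1 _ Hq).
    replace (m / (m + 1) - 1) with (- / (m + 1)) in * by (field; lra). lra. }
  assert (Hbern : 1 + x / (m + 1) <= Rpower ((m + 1) / m) x).
  { unfold Rpower. eapply Rle_trans; [| apply exp_ineq1_le].
    assert (x * / (m + 1) <= x * ln ((m + 1) / m)) by (apply Rmult_le_compat_l; lra).
    unfold Rdiv in *; lra. }
  pose proof (Rpower_pos m x).
  replace (x + m + 1) with ((m + 1) * (1 + x / (m + 1))) by (field; lra).
  rewrite E. apply Rmult_le_compat_l with (r := m + 1) in Hbern; [nra | lra].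
Qed.

(* (m+1) (m+x+2)^x <= (x+m+1) (m+x+1)^x, using (1+t)^x <= e^(xt) and
   e^(xt) (1 - xt) <= 1 with t = 1/(m+x+1). *)
Lemma gauss_dec_step m : 0 <= m ->
  (m + 1) * Rpower (m + 1 + (x + 1)) x <= (x + m + 1) * Rpower (m + (x + 1)) x.
Proof.
  intro Hm. set (t := / (m + (x + 1))).
  assert (Ht : 0 < t) by (apply Rinv_0_lt_compat; lra).
  assert (E : Rpower (m + 1 + (x + 1)) x = Rpower (m + (x + 1)) x * Rpower (1 + t) x).
  { rewrite Rpower_mult_distr by lra. f_equal; unfold t; field; lra. }
  assert (Hexp : Rpower (1 + t) x <= exp (x * t)).
  { apply exp_le_mono, Rmult_le_compat_l; [lra |].
    pose proof (ln_le_sub1 (1 + t)); lra. }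
  assert (Hprod : exp (x * t) * (1 - x * t) <= 1).
  { assert (Hinv : exp (x * t) * exp (- (x * t)) = 1)
      by (rewrite <- exp_plus, Rplus_opp_r; apply exp_0).
    pose proof (exp_ineq1_le (- (x * t))). pose proof (exp_pos (x * t)). nra. }
  replace (1 - x * t) with ((m + 1) / (m + (x + 1))) in Hprod by (unfold t; field; lra).
  assert (Hstep : (m + 1) * Rpower (1 + t) x <= x + m + 1).
  { apply Rmult_le_compat_r with (r := m + (x + 1)) in Hprod; [| lra].
    replace (exp (x * t) * ((m + 1) / (m + (x + 1))) * (m + (x + 1)))
      with ((m + 1) * exp (x * t)) in Hprod by (field; lra).
    apply Rmult_le_compat_l with (r := m + 1) in Hexp; lra. }
  pose proof (Rpower_pos (m + (x + 1)) x).
  rewrite E. nra.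
Qed.

(* A decreasing sequence dominating the Gauss sequence. *)
Let gauss_upper (n : nat) : R := INR (fact n) * Rpower (INR n + (x + 1)) x / P n.

Lemma gauss_seq_pos n : 0 < gauss_seq x n.
Proof.
  apply Rdiv_lt_0_compat; [apply Rmult_lt_0_compat |];
    [apply fact_pos | apply Rpower_pos | apply gauss_prod_pos].
Qed.

Lemma gauss_seq_growing n : (1 <= n)%nat -> gauss_seq x n <= gauss_seq x (S n).
Proof.
  intro Hn. unfold gauss_seq. fold (P n) (P (S n)).
  rewrite (gauss_term n), (gauss_term_S n), S_INR.
  apply Rmult_le_compat_l; [left; apply gauss_ratio_pos |].
  apply gauss_inc_step. apply (le_INR 1) in Hn. simpl in Hn; lra.
Qed.

Lemma gauss_upper_le_0 n : gauss_upper n <= gauss_upper 0.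
Proof.
  induction n as [|n IH]; [lra |]. eapply Rle_trans; [| exact IH].
  unfold gauss_upper. rewrite (gauss_term n), (gauss_term_S n), S_INR.
  apply Rmult_le_compat_l; [left; apply gauss_ratio_pos |].
  apply gauss_dec_step, pos_INR.
Qed.

Lemma gauss_seq_le_upper n : (1 <= n)%nat -> gauss_seq x n <= gauss_upper n.
Proof.
  intro Hn. apply (le_INR 1) in Hn. simpl in Hn.
  apply Rmult_le_compat_r; [left; apply Rinv_0_lt_compat, gauss_prod_pos |].
  apply Rmult_le_compat_l; [left; apply fact_pos |].
  apply Rle_Rpower_l; lra.
Qed.

Lemma Gamma_pos : 0 < Gamma x.
Proof.
  set (u := fun m => gauss_seq x (m + 1)).
  assert (Hg : Un_growing u).
  { intro m. unfold u. replace (S m + 1)%nat with (S (m + 1)) by lia.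
    apply gauss_seq_growing; lia. }
  assert (Hub : has_ub u).
  { exists (gauss_upper 0). intros r [i ->]. unfold u.
    eapply Rle_trans; [apply gauss_seq_le_upper; lia | apply gauss_upper_le_0]. }
  destruct (growing_cv u Hg Hub) as [l Hl].
  assert (Hcv : Un_cv (gauss_seq x) l) by exact (CV_shift _ 1 _ Hl).
  pose proof (growing_ineq u l Hg Hl 0%nat).
  pose proof (gauss_seq_pos 1).
  unfold Gamma.
  pose proof (epsilon_spec (inhabits 0) (fun g => Un_cv (gauss_seq x) g)
                (ex_intro _ l Hcv)) as HE.
  rewrite (UL_sequence _ _ _ HE Hcv). unfold u in *; simpl in *; lra.
Qed.

End GaussLimit.

Lemma C_nu_pos nu : 0 < nu -> 0 < C_nu nu.
Proof.
  intro H. apply Rdiv_lt_0_compat; [apply Gamma_pos; lra |].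
  apply Rmult_lt_0_compat; [apply sqrt_lt_R0, PI_RGT_0 | apply Gamma_pos; lra].
Qed.

Definition uZ (f : Z -> R) (n : nat) : R :=
  match n with
  | O => f 0%Z
  | S _ => f (Z.of_nat n) + f (- Z.of_nat n)%Z
  end.

Lemma sumZ_spec f l : infinite_sum (uZ f) l -> sumZ f = l.
Proof.
  intro H. unfold sumZ.
  pose proof (epsilon_spec (inhabits 0) (fun l => infinite_sum (uZ f) l)
                (ex_intro _ l H)) as HE.
  exact (UL_sequence _ _ _ HE H).
Qed.

Lemma nonneg_series_bounds (u : nat -> R) (M : R) :
  (forall n, 0 <= u n) -> (forall n, sum_f_R0 u n <= M) ->
  exists l, infinite_sum u l /\ u 0%nat <= l <= M.
Proof.
  intros Hu HM.
  assert (Hg : Un_growing (sum_f_R0 u)) by (intro n; simpl; pose proof (Hu (S n)); lra).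
  assert (Hub : has_ub (sum_f_R0 u)) by (exists M; intros r [i ->]; apply HM).
  destruct (growing_cv _ Hg Hub) as [l Hl].
  exists l; split; [exact Hl | split].
  - exact (growing_ineq _ _ Hg Hl 0%nat).
  - apply (Rle_cv_lim (Vn := fun _ => M) HM Hl).
    intros e He. exists 0%nat. intros. unfold Rdist. rewrite Rminus_diag, Rabs_R0; lra.
Qed.

Lemma sumZ_telescoping_bound (f : Z -> R) (B : R) :
  0 <= B -> (forall k, 0 <= f k) ->
  (forall n, uZ f (S n) <= B * (/ (INR n + 1) - / (INR n + 2))) ->
  f 0%Z <= sumZ f <= f 0%Z + B.
Proof.
  intros HB Hf Htail.
  assert (Hpart : forall N, sum_f_R0 (uZ f) N <= f 0%Z + B - B / (INR N + 1)).
  { induction N as [|N IH]; [simpl; unfold Rdiv; rewrite Rplus_0_l, Rinv_1; lra |].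
    cbn [sum_f_R0]. pose proof (Htail N). rewrite S_INR.
    replace (INR N + 1 + 1) with (INR N + 2) by ring. unfold Rdiv in *; lra. }
  destruct (nonneg_series_bounds (uZ f) (f 0%Z + B)) as [l [Hl Hlb]].
  - intros [|n]; simpl; [apply Hf |]. pose proof (Hf (Z.pos (Pos.of_succ_nat n))).
    pose proof (Hf (Z.neg (Pos.of_succ_nat n))). lra.
  - intro N. pose proof (Hpart N). pose proof (pos_INR N).
    assert (0 <= B / (INR N + 1))
      by (apply Rmult_le_pos; [lra | left; apply Rinv_0_lt_compat; lra]).
    lra.
  - rewrite (sumZ_spec f l Hl). exact Hlb.
Qed.

Lemma gstar_nonneg nu a w : 0 < nu -> 0 <= gstar nu a w.
Proof.
  intro H. left. apply Rmult_lt_0_compat; [apply Rmult_lt_0_compat |];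
    [apply C_nu_pos; exact H | apply Rpower_pos | apply Rpower_pos].
Qed.

(* Since nu + 1/2 >= 1, the decaying factor is at most 1/m^2 once |w| >= m >= 1. *)
Lemma gstar_decay_bound nu a w m : / 2 <= nu -> 1 <= m -> m * m <= w ^ 2 ->
  Rpower (a ^ 2 + w ^ 2) (- (nu + / 2)) <= / (m * m).
Proof.
  intros Hnu Hm Hw. rewrite Rpower_Ropp.
  apply Rinv_le_contravar; [nra |].
  assert (H1 : Rpower (m * m) 1 <= Rpower (m * m) (nu + / 2)) by (apply Rle_Rpower; nra).
  rewrite Rpower_1 in H1 by nra.
  eapply Rle_trans; [exact H1 |]. apply Rle_Rpower_l; [lra | split; nra].
Qed.

Lemma inv_sq_telescoping m : 1 <= m -> / (m * m) <= 2 * (/ m - / (m + 1)).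
Proof.
  intro Hm.
  replace (2 * (/ m - / (m + 1))) with (/ (m * m) * (2 * m / (m + 1))) by (field; lra).
  rewrite <- (Rmult_1_r (/ (m * m))) at 1.
  apply Rmult_le_compat_l; [left; apply Rinv_0_lt_compat; nra |].
  apply Rmult_le_reg_r with (m + 1); [lra |].
  unfold Rdiv; rewrite Rmult_assoc, Rinv_l by lra; lra.
Qed.

Lemma gdelta_bounds nu delta theta lam : / 2 <= nu -> - PI <= lam <= PI ->
  gstar nu (delta * theta) lam <= gdelta nu delta theta lam <=
  gstar nu (delta * theta) lam + 4 * (C_nu nu * Rpower (delta * theta) (2 * nu)).
Proof.
  intros Hnu Hl. set (a := delta * theta).
  set (K := C_nu nu * Rpower a (2 * nu)).
  assert (HK : 0 < K) by (apply Rmult_lt_0_compat; [apply C_nu_pos; lra | apply Rpower_pos]).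
  assert (Hpi : 3 < PI) by (pose proof PI2_3_2; lra).
  set (f := fun k => gstar nu a (lam + 2 * IZR k * PI)).
  replace (gstar nu a lam) with (f 0%Z) by (unfold f; f_equal; simpl; ring).
  apply sumZ_telescoping_bound; [lra | intro; apply gstar_nonneg; lra |].
  intro n. unfold uZ, f, gstar. fold K.
  rewrite opp_IZR, <- INR_IZR_INZ, S_INR.
  pose proof (pos_INR n). set (m := INR n + 1).
  replace (INR n + 2) with (m + 1) by (unfold m; ring).
  assert (Hm : 1 <= m) by (unfold m; lra).
  assert (m <= lam + 2 * m * PI) by nra. assert (lam + 2 * - m * PI <= - m) by nra.
  pose proof (gstar_decay_bound nu a (lam + 2 * m * PI) m Hnu Hm ltac:(simpl; nra)).
  pose proof (gstar_decay_bound nu a (lam + 2 * - m * PI) m Hnu Hm ltac:(simpl; nra)).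
  pose proof (inv_sq_telescoping m Hm).
  nra.
Qed.

Lemma gstar_amplitude_bound nu a amax lam :
  0 < nu -> 0 < a <= amax -> - PI <= lam <= PI ->
  C_nu nu * Rpower a (2 * nu)
  <= Rpower (amax ^ 2 + PI ^ 2) (nu + / 2) * gstar nu a lam.
Proof.
  intros Hnu Ha Hl. unfold gstar. rewrite Rpower_Ropp.
  set (K := C_nu nu * Rpower a (2 * nu)).
  assert (HK : 0 < K) by (apply Rmult_lt_0_compat; [apply C_nu_pos, Hnu | apply Rpower_pos]).
  set (q := Rpower (a ^ 2 + lam ^ 2) (nu + / 2)).
  set (Q := Rpower (amax ^ 2 + PI ^ 2) (nu + / 2)).
  assert (Hq : 0 < q) by apply Rpower_pos.
  assert (HqQ : q <= Q).
  { pose proof (Rmult_le_pos (PI - lam) (PI + lam) ltac:(lra) ltac:(lra)).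
    pose proof (Rmult_le_compat a amax a amax ltac:(lra) ltac:(lra) ltac:(lra) ltac:(lra)).
    apply Rle_Rpower_l; [lra | simpl; rewrite !Rmult_1_r; split; nra]. }
  replace (Q * (K * / q)) with (K * (Q / q)) by (field; lra).
  rewrite <- (Rmult_1_r K) at 1. apply Rmult_le_compat_l; [lra |].
  apply Rmult_le_reg_r with q; [exact Hq |].
  unfold Rdiv; rewrite Rmult_assoc, Rinv_l by lra; lra.
Qed.

Lemma amplitude_scaling nu delta theta thu : 0 <= nu -> 0 < delta -> 0 < theta <= thu ->
  Rpower (delta * theta) (2 * nu) <= Rpower delta (2 * nu) * Rpower thu (2 * nu).
Proof.
  intros Hnu Hd Ht. rewrite Rpower_mult_distr by lra.
  apply Rle_Rpower_l; nra.
Qed.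

Lemma frac_mono x y d : 0 <= x <= y -> 0 < d -> x / (x + d) <= y / (y + d).
Proof.
  intros H Hd.
  assert (E : y / (y + d) - x / (x + d) = d * (y - x) / ((x + d) * (y + d))) by (field; lra).
  assert (0 <= d * (y - x) / ((x + d) * (y + d))).
  { apply Rmult_le_pos; [nra | left; apply Rinv_0_lt_compat; nra]. }
  lra.
Qed.

Lemma frac_lipschitz x y d : 0 <= x <= y -> 0 < d ->
  y / (y + d) <= x / (x + d) + (y - x) / d.
Proof.
  intros H Hd.
  assert (E : x / (x + d) + (y - x) / d - y / (y + d)
              = (y - x) * ((x + d) * (y + d) - d * d) / (d * ((x + d) * (y + d))))
    by (field; lra).
  assert (0 <= (y - x) * ((x + d) * (y + d) - d * d) / (d * ((x + d) * (y + d)))).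
  { apply Rmult_le_pos; [apply Rmult_le_pos; nra |].
    left; apply Rinv_0_lt_compat, Rmult_lt_0_compat; [lra | nra]. }
  lra.
Qed.

Lemma frac_le_linear y d : 0 <= y -> 0 < d -> y / (y + d) <= y / d.
Proof.
  intros H Hd. apply Rmult_le_compat_l; [exact H |]. apply Rinv_le_contravar; lra.
Qed.

(* The three inequalities of the theorem in abstract form: x = b g0 and
   y = b G, where the periodisation G exceeds g0 by at most 4K, and the
   amplitude K is both O(e) and O(g0). *)
Lemma transformed_bounds b bu g0 G K M e Q d :
  0 < b <= bu -> 0 < d -> 0 <= M -> 0 <= e -> 0 <= Q ->
  0 <= g0 <= G -> G <= g0 + 4 * K -> K <= M * e -> K <= Q * g0 ->
  let C := bu * (4 * M + 1 + 4 * Q) / d in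
  b * g0 / (b * g0 + d) <= b * G / (b * G + d) /\
  b * G / (b * G + d) <= b * g0 / (b * g0 + d) + C * e /\
  b * G / (b * G + d) <= C * g0.
Proof.
  intros Hb Hd HM He HQ Hg HGup HKe HKg C.
  assert (Hbg : 0 <= b * g0 <= b * G)
    by (split; [apply Rmult_le_pos | apply Rmult_le_compat_l]; lra).
  assert (Hgap : b * G - b * g0 <= bu * (4 * M) * e).
  { replace (b * G - b * g0) with (b * (G - g0)) by ring.
    rewrite Rmult_assoc. apply Rmult_le_compat; lra. }
  assert (HGg : b * G <= bu * (1 + 4 * Q) * g0).
  { rewrite Rmult_assoc. apply Rmult_le_compat; lra. }
  assert (HMe : 0 <= bu * (1 + 4 * Q) * e) by (apply Rmult_le_pos; nra).
  assert (HMg : 0 <= bu * (4 * M) * g0) by (apply Rmult_le_pos; nra).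
  split; [| split].
  - apply frac_mono; assumption.
  - eapply Rle_trans; [apply frac_lipschitz; eassumption |].
    apply Rplus_le_compat_l. unfold C, Rdiv.
    rewrite (Rmult_comm _ e), <- Rmult_assoc. apply Rmult_le_compat_r.
    + left; apply Rinv_0_lt_compat, Hd.
    + nra.
  - eapply Rle_trans; [apply frac_le_linear; lra |]. unfold C, Rdiv.
    rewrite (Rmult_comm _ g0), <- Rmult_assoc. apply Rmult_le_compat_r.
    + left; apply Rinv_0_lt_compat, Hd.
    + nra.
Qed.

Theorem lemma5p2 (nu : R) (Hnu : / 2 <= nu)
  (bl bu thl thu : R)
  (Hb : 0 < bl <= bu) (Hth : 0 < thl <= thu) :
  exists C : R, 0 < C /\
    forall delta b theta lambda : R,
      0 < delta <= 1 ->
      bl <= b <= bu ->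
      thl <= theta <= thu ->
      - PI <= lambda <= PI ->
      astar nu b (delta * theta) lambda <= adelta nu b delta theta lambda /\
      adelta nu b delta theta lambda
        <= astar nu b (delta * theta) lambda + C * Rpower delta (2 * nu) /\
      adelta nu b delta theta lambda <= C * gstar nu (delta * theta) lambda.
Proof.
  pose proof PI_RGT_0 as Hpi.
  pose proof (C_nu_pos nu ltac:(lra)) as HCn.
  set (T := Rpower thu (2 * nu)). set (Q := Rpower (thu ^ 2 + PI ^ 2) (nu + / 2)).
  assert (HT : 0 < T) by apply Rpower_pos. assert (HQ : 0 < Q) by apply Rpower_pos.
  exists (bu * (4 * (C_nu nu * T) + 1 + 4 * Q) / / (2 * PI)).
  split.
  { apply Rdiv_lt_0_compat; [apply Rmult_lt_0_compat | apply Rinv_0_lt_compat]; nra. }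
  intros delta b theta lambda Hd Hbb Ht Hl.
  assert (Ha : 0 < delta * theta <= thu) by (split; nra).
  assert (HKe : C_nu nu * Rpower (delta * theta) (2 * nu)
                <= C_nu nu * T * Rpower delta (2 * nu)).
  { rewrite Rmult_assoc, (Rmult_comm T). apply Rmult_le_compat_l; [lra |].
    apply amplitude_scaling; lra. }
  destruct (gdelta_bounds nu delta theta lambda Hnu Hl) as [Hlow Hup].
  exact (transformed_bounds b bu _ (gdelta nu delta theta lambda) _
           (C_nu nu * T) (Rpower delta (2 * nu)) Q (/ (2 * PI))
           ltac:(lra) ltac:(apply Rinv_0_lt_compat; lra) ltac:(nra)
           ltac:(left; apply Rpower_pos) ltac:(lra)
           (conj (gstar_nonneg nu _ lambda ltac:(lra)) Hlow) Hup HKe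
           (gstar_amplitude_bound nu _ thu lambda ltac:(lra) Ha Hl)).
Qed.
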